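(* Let $G=(V,E)$ be an atomic bispanning graph with vertex-connectivity $2$ which is the $2$-clique sum of two simple bispanning graphs $G_1=(V_1,E_1)$ and $G_2=(V_2,E_2)$ at edges $d_1\in E_1$ and $d_2\in E_2$ (i.e. $G$ arises from the disjoint union of $G_1,G_2$ by identifying the ends of $d_1$ with those of $d_2$ and deleting $d_1,d_2$). Let $$V_\eta=\{((S_1,T_1),(S_2,T_2))\in V_{\tau(G_1)}\times V_{\tau(G_2)}:\text{not }((d_1\in S_1\text{ and }d_2\in S_2)\text{ or }(d_1\in T_1\text{ and }d_2\in T_2))\}.$$ Then there is a bijection $\varphi_v:V_{\tau(G)}\to V_\eta$.
   Context: Graphs are finite, undirected, may have parallel edges, no loops. A spanning tree of $H$ is an edge set $T$ with $(V(H),T)$ connected and acyclic; $H$ is bispanning if its edge set is the union of two disjoint spanning trees; a bispanning graph is atomic if its only bispanning subgraphs are itself and single vertices. Vertex-connectivity is the largest $k$ with $|V|>k$ such that deleting fewer than $k$ vertices leaves the graph connected. For a bispanning graph $H$, $V_{\tau(H)}$ is the set of ordered pairs $(S,T)$ of disjoint spanning trees of $H$ whose union is the edge set of $H$. *)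

From mathcomp Require Import all_boot.
Set Implicit Arguments. Unset Strict Implicit. Unset Printing Implicit Defensive.

(* A finite multigraph: vertex type, edge type, and the two ends of each edge
   (the orientation of the pair is irrelevant everywhere below). No loops. *)
Record mgraph := MGraph {
  gV : finType;
  gE : finType;
  gends : gE -> gV * gV;
  gnoloop : forall e, (gends e).1 != (gends e).2 }.

Section Defs.
Variable G : mgraph.
Local Notation V := (gV G).
Local Notation E := (gE G).
Local Notation ends := (gends (m:=G)).

Definition joins (e : E) (u v : V) : bool :=
  (ends e == (u, v)) || (ends e == (v, u)).

Definition adj (F : {set E}) : rel V :=
  fun u v => [exists e in F, joins e u v].

Definition connected_on (W : {set V}) (F : {set E}) : bool :=
  [forall u in W, forall v in W, connect (adj F) u v].

Definition acyclic (F : {set E}) : bool :=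
  [forall e in F, ~~ connect (adj (F :\ e)) (ends e).1 (ends e).2].

Definition spanning_tree_on (W : {set V}) (F T : {set E}) : bool :=
  [&& T \subset F, connected_on W T & acyclic T].

Definition spanning_tree (T : {set E}) : bool := spanning_tree_on setT setT T.

Definition is_subgraph (W : {set V}) (F : {set E}) : Prop :=
  W != set0 /\ forall e, e \in F -> ((ends e).1 \in W) && ((ends e).2 \in W).

Definition bispanning_on (W : {set V}) (F : {set E}) : Prop :=
  exists S T : {set E}, [/\ spanning_tree_on W F S, spanning_tree_on W F T,
                          [disjoint S & T] & S :|: T = F].

Definition bispanning : Prop := bispanning_on setT setT.

Definition atomic : Prop :=
  bispanning /\
  forall (W : {set V}) (F : {set E}), is_subgraph W F -> bispanning_on W F ->
    (W = setT /\ F = setT) \/ #|W| = 1.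

(* simple: no parallel edges (no loops holds by construction) *)
Definition simple_graph : Prop :=
  forall e f : E, e != f -> ~~ joins f (ends e).1 (ends e).2.

Definition connected_after_deleting (X : {set V}) : Prop :=
  forall u v, u \notin X -> v \notin X ->
    connect (adj [set e | ((ends e).1 \notin X) && ((ends e).2 \notin X)]) u v.

Definition vconn_ge (k : nat) : Prop :=
  k < #|V| /\ forall X : {set V}, #|X| < k -> connected_after_deleting X.

(* vertex-connectivity equals 2 (the admissible k are downward closed) *)
Definition vertex_connectivity_two : Prop := vconn_ge 2 /\ ~ vconn_ge 3.

Definition Vtau : {set {set E} * {set E}} :=
  [set p | [&& spanning_tree p.1, spanning_tree p.2,
              [disjoint p.1 & p.2] & p.1 :|: p.2 == setT]].

End Defs.

(* G is (isomorphic to) the 2-clique sum of G1 and G2 at d1 and d2: the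
   vertices of G are those of G1 and G2 with the ends of d1 identified with
   the ends of d2 (first with first, second with second), and the edges of G
   are those of G1 other than d1 together with those of G2 other than d2. *)
Definition clique_sum2 (G G1 G2 : mgraph) (d1 : gE G1) (d2 : gE G2) : Prop :=
  exists (i1 : gV G1 -> gV G) (i2 : gV G2 -> gV G)
         (j1 : gE G1 -> gE G) (j2 : gE G2 -> gE G),
  [/\ injective i1 /\ injective i2,
      i1 (gends d1).1 = i2 (gends d2).1 /\ i1 (gends d1).2 = i2 (gends d2).2,
      (forall x y, i1 x = i2 y ->
         (x = (gends d1).1 /\ y = (gends d2).1) \/
         (x = (gends d1).2 /\ y = (gends d2).2)) /\
      (forall v : gV G, (exists x, i1 x = v) \/ (exists y, i2 y = v)),
      (forall e e', e != d1 -> e' != d1 -> j1 e = j1 e' -> e = e') /\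
      (forall e e', e != d2 -> e' != d2 -> j2 e = j2 e' -> e = e') /\
      (forall e1 e2, e1 != d1 -> e2 != d2 -> j1 e1 <> j2 e2) /\
      (forall e : gE G, (exists e1, e1 != d1 /\ j1 e1 = e) \/
                        (exists e2, e2 != d2 /\ j2 e2 = e)) &
      (forall e, e != d1 -> joins (j1 e) (i1 (gends e).1) (i1 (gends e).2)) /\
      (forall e, e != d2 -> joins (j2 e) (i2 (gends e).1) (i2 (gends e).2))].

Arguments clique_sum2 : clear implicits.

Definition Veta (G1 G2 : mgraph) (d1 : gE G1) (d2 : gE G2) :
  {set ({set gE G1} * {set gE G1}) * ({set gE G2} * {set gE G2})} :=
  [set p | [&& p.1 \in Vtau G1, p.2 \in Vtau G2 &
      ~~ (((d1 \in p.1.1) && (d2 \in p.2.1)) ||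
          ((d1 \in p.1.2) && (d2 \in p.2.2)))]].

(* Let S be a spanning tree of G. Its edges in G1 - d1, together with the virtual
   edge d1 exactly when its edges in G2 - d2 join the ends of d2, form a spanning tree
   of G1: connectivity follows by retracting G2 onto d1, and S cannot join the ends of
   d1 inside G1 and those of d2 inside G2 at once, since that would close a cycle.
   For (S, T) in V_tau(G), exactly one of S, T joins the ends of d2 inside G2: if
   neither did, the projections to G1 would be disjoint spanning trees covering
   E1 - d1, one edge too few for the bispanning G1; if both did, neither joins the ends
   of d1 inside G1, and the same count in G2 fails. Hence projecting to both sides
   lands in V_eta, and gluing (S1 - d1) + (S2 - d2) is the inverse map. *)

From mathcomp Require Import all_boot zify.
Set Implicit Arguments. Unset Strict Implicit. Unset Printing Implicit Defensive.

Lemma connect_ind (T : finType) (r : rel T) (P : T -> Prop) x y :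
  P x -> (forall z w, P z -> r z w -> P w) -> connect r x y -> P y.
Proof.
move=> Px step /connectP [p pth ->]; elim: p x Px pth => [|z p IH] x Px //=.
by case/andP=> rxz pz; apply: IH pz; apply: step rxz.
Qed.

Lemma connect_homo (T T' : finType) (f : T -> T') (r : rel T) (r' : rel T') :
  (forall x y, r x y -> connect r' (f x) (f y)) ->
  forall x y, connect r x y -> connect r' (f x) (f y).
Proof.
move=> hr x y; apply: (connect_ind (P := fun z => connect r' (f x) (f z))).
  exact: connect0.
by move=> z w xz /hr; apply: connect_trans.
Qed.

Lemma disjointP (T : finType) (A B : {pred T}) :
  (forall x, x \in A -> x \in B -> False) -> [disjoint A & B].
Proof.
move=> AB; rewrite disjoint_subset; apply/subsetP => x xA.
by rewrite inE; apply/negP => /(AB x xA).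
Qed.

Section Multigraph.
Variable H : mgraph.
Local Notation V := (gV H).
Local Notation E := (gE H).
Local Notation ends := (gends (m:=H)).
Implicit Types (F : {set E}) (e : E).

Lemma joinsC e u v : joins e u v = joins e v u.
Proof. by rewrite /joins orbC. Qed.

Lemma joins_ends e : joins e (ends e).1 (ends e).2.
Proof. by rewrite /joins -surjective_pairing eqxx. Qed.

Lemma joinsP e u v : joins e u v ->
  (u = (ends e).1 /\ v = (ends e).2) \/ (u = (ends e).2 /\ v = (ends e).1).
Proof. by case/orP=> /eqP ->; [left|right]. Qed.

Lemma joins_same e a b u v :
  joins e a b -> joins e u v -> (u = a /\ v = b) \/ (u = b /\ v = a).
Proof.
by case/joinsP=> [[-> ->]|[-> ->]] /joinsP [[-> ->]|[-> ->]]; [left|right|right|left].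
Qed.

Lemma adj_sym F : symmetric (adj F).
Proof.
by move=> u v; apply/existsP/existsP => -[e /andP [eF j]]; exists e;
  rewrite eF joinsC.
Qed.

Lemma connect_adjC F u v : connect (adj F) u v = connect (adj F) v u.
Proof. exact: (sym_connect_sym (adj_sym F)). Qed.

Lemma adj_ends F e : e \in F -> adj F (ends e).1 (ends e).2.
Proof. by move=> eF; apply/existsP; exists e; rewrite eF joins_ends. Qed.

Lemma connect_adjS F F' : F \subset F' ->
  forall u v, connect (adj F) u v -> connect (adj F') u v.
Proof.
move=> FF'; apply: connect_sub => u v /existsP [e /andP [eF j]].
by apply: connect1; apply/existsP; exists e; rewrite (subsetP FF' _ eF).
Qed.

Lemma connect_adj0 u v : connect (adj (set0 : {set E})) u v -> u = v.
Proof. by apply: (connect_ind (P := eq u)) => // z w _ /existsP [e]; rewrite inE. Qed.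

Lemma acyclicS F F' : acyclic F -> F' \subset F -> acyclic F'.
Proof.
move=> /forallP acF F'F; apply/forallP => e; apply/implyP => eF'.
have := acF e; rewrite (subsetP F'F _ eF') /=; apply: contra.
by apply: connect_adjS; apply: setSD.
Qed.

Lemma acyclicP F e : acyclic F -> e \in F ->
  ~ connect (adj (F :\ e)) (ends e).1 (ends e).2.
Proof. by move=> /forallP /(_ e) /implyP acF /acF /negP. Qed.

Lemma connect_adjD1 F e x y : connect (adj F) x y ->
  connect (adj (F :\ e)) x y \/
  (connect (adj (F :\ e)) x (ends e).1 /\ connect (adj (F :\ e)) (ends e).2 y) \/
  (connect (adj (F :\ e)) x (ends e).2 /\ connect (adj (F :\ e)) (ends e).1 y).
Proof.
set c := connect (adj (F :\ e)).
apply: (connect_ind (P := fun y => c x y \/ (c x (ends e).1 /\ c (ends e).2 y) \/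
                                 (c x (ends e).2 /\ c (ends e).1 y))).
  by left; apply: connect0.
move=> z w xz /existsP [f /andP [fF j]].
have [fe|fe] := eqVneq f e.
  subst f; rewrite /c in xz *.
  by case: (joinsP j) => -[-> ->] in xz *; case: xz => [|[[]|[]]]; auto using connect0.
have zw : c z w by apply: connect1; apply/existsP; exists f; rewrite !inE fe fF.
case: xz => [xz|[[xu vz]|[xv uz]]].
- by left; apply: connect_trans xz zw.
- by right; left; split; last by apply: connect_trans vz zw.
- by right; right; split; last by apply: connect_trans uz zw.
Qed.

Lemma forest_disjoint_paths F (A B : {set E}) (a b : V) :
  acyclic F -> A \subset F -> B \subset F -> [disjoint A & B] -> a != b ->
  connect (adj A) a b -> ~ connect (adj B) a b.
Proof.
move=> acF AF BF AB ab cA.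
have [n] := ubnP #|B|; elim: n B BF AB => // n IH B BF AB ltBn cB.
have [B0|[e eB]] := set_0Vmem B.
  by subst B; move: ab; rewrite (connect_adj0 cB) eqxx.
have BeF : B :\ e \subset F :\ e by apply: setSD.
have AFe : A \subset F :\ e.
  apply/subsetP => x xA; rewrite !inE (subsetP AF _ xA) andbT.
  by apply: contraTneq xA => ->; rewrite (disjointFl AB eB).
have cAe := connect_adjS AFe cA.
have noe := acyclicP acF (subsetP BF _ eB).
case: (connect_adjD1 e cB) => [cBe|[[au vb]|[av ub]]].
- apply: IH cBe.
  + by apply: subset_trans BF; apply: subsetDl.
  + by apply: disjointWr AB; apply: subsetDl.
  + by move: ltBn; rewrite (cardsD1 e B) eB.
- apply: noe; move: au vb => /(connect_adjS BeF) au /(connect_adjS BeF) vb.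
  rewrite connect_adjC in au; rewrite connect_adjC in vb.
  exact: connect_trans au (connect_trans cAe vb).
- apply: noe; move: av ub => /(connect_adjS BeF) av /(connect_adjS BeF) ub.
  rewrite connect_adjC in cAe; exact: connect_trans ub (connect_trans cAe av).
Qed.

Definition component F x : {set V} := [set y | connect (adj F) x y].

Definition n_components F : nat := #|component F @: [set: V]|.

Lemma component_eq F x y : (component F x == component F y) = connect (adj F) x y.
Proof.
apply/eqP/idP => [Cxy|xy].
  have : y \in component F y by rewrite inE connect0.
  by rewrite -Cxy inE.
apply/setP => z; rewrite !inE; apply/idP/idP; last exact: connect_trans.
by apply: connect_trans; rewrite connect_adjC.
Qed.

Lemma n_components_setD1 F e : e \in F ->
  ~ connect (adj (F :\ e)) (ends e).1 (ends e).2 ->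
  n_components (F :\ e) = (n_components F).+1.
Proof.
move=> eF bridge; set F' := F :\ e; set A := component F' @: [set: V].
pose merge (C : {set V}) := [set z | [exists y in C, connect (adj F) y z]].
have merge_comp x : merge (component F' x) = component F x.
  apply/setP => z; rewrite !inE; apply/existsP/idP => [[y /andP []]|xz].
    by rewrite inE => /(connect_adjS (subsetDl F [set e])); apply: connect_trans.
  by exists x; rewrite inE connect0.
set p := component F' (ends e).1; set q := component F' (ends e).2.
have pA : p \in A by apply: imset_f.
have pq : p != q by rewrite component_eq; apply/negP.
have merge_pq : merge p = merge q.
  by rewrite !merge_comp; apply/eqP; rewrite component_eq connect1 ?adj_ends.
have mergeA : component F @: [set: V] = merge @: (A :\ p).
  apply/setP => C; apply/imsetP/imsetP => [[x _ ->]|[D]].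
    have [px|px] := eqVneq (component F' x) p.
      exists q; first by rewrite !inE eq_sym pq imset_f.
      by rewrite -merge_pq -px merge_comp.
    exists (component F' x); first by rewrite !inE px imset_f.
    by rewrite merge_comp.
  by rewrite !inE => /andP [_ /imsetP [x _ ->]] ->; exists x; rewrite ?merge_comp.
have merge_inj : {in A :\ p &, injective merge}.
  move=> C D; rewrite !inE => /andP [Cp /imsetP [x _ ?]] /andP [Dp /imsetP [y _ ?]].
  subst C D.
  rewrite !merge_comp => /eqP; rewrite component_eq => /(connect_adjD1 e).
  case=> [|[[xu _]|[_ uy]]]; first by rewrite -component_eq => /eqP.
  - by move: Cp; rewrite -component_eq in xu; rewrite (eqP xu) /p eqxx.
  - by move: Dp; rewrite connect_adjC -component_eq in uy; rewrite (eqP uy) /p eqxx.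
by rewrite /n_components mergeA (card_in_imset merge_inj) (cardsD1 p A) pA.
Qed.

Lemma forest_card F : acyclic F -> #|F| + n_components F = #|V|.
Proof.
have [n] := ubnP #|F|; elim: n F => // n IH F ltFn acF.
have [F0|[e eF]] := set_0Vmem F.
  subst F; rewrite cards0 /n_components.
  have -> : component (set0 : {set E}) @: [set: V] = set1 @: [set: V].
    apply: eq_imset => x; apply/setP => y; rewrite !inE.
    by apply/idP/eqP => [/connect_adj0|<-]; rewrite ?connect0.
  by rewrite card_imset ?cardsT //; apply: set1_inj.
have acFe : acyclic (F :\ e) by apply: acyclicS acF (subsetDl F [set e]).
have := IH (F :\ e) _ acFe; rewrite (n_components_setD1 eF (acyclicP acF eF)).
rewrite (cardsD1 e F) eF addnS; apply.
by move: ltFn; rewrite (cardsD1 e F) eF.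
Qed.

Lemma spanning_tree_connect (T : {set E}) x y : spanning_tree T -> connect (adj T) x y.
Proof.
by case/and3P => _ /forallP /(_ x); rewrite inE => /forallP /(_ y); rewrite inE.
Qed.

Lemma spanning_tree_card (T : {set E}) (x0 : V) : spanning_tree T -> #|T|.+1 = #|V|.
Proof.
move=> tT; case/and3P: (tT) => _ _ /forest_card <-; rewrite -addn1; congr (_ + _).
rewrite /n_components -(cards1 [set: V]).
have -> // : component T @: [set: V] = [set [set: V]].
apply/setP => C; rewrite !inE; apply/imsetP/eqP => [[x _ ->]|->].
  by apply/setP => y; rewrite !inE spanning_tree_connect.
by exists x0 => //; apply/setP => y; rewrite !inE spanning_tree_connect.
Qed.

(* All spanning trees have #|V| - 1 edges, so E has exactly 2 (#|V| - 1) edges. *)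
Lemma bispanning_no_pair_setD1 (x0 : V) e0 (S T : {set E}) : bispanning H ->
  spanning_tree S -> spanning_tree T -> [disjoint S & T] -> S :|: T != [set: E] :\ e0.
Proof.
case=> [A [B [tA tB dAB uAB]]] tS tT dST; apply/eqP => uST.
have := cardsUI A B; have := cardsUI S T.
move: dAB dST; rewrite -!setI_eq0 => /eqP -> /eqP ->.
rewrite uAB uST (cardsD1 e0 [set: E]) in_setT !cards0.
have := spanning_tree_card x0 tA; have := spanning_tree_card x0 tB.
have := spanning_tree_card x0 tS; have := spanning_tree_card x0 tT.
lia.
Qed.

End Multigraph.

Record clique_sum_maps (G GA GB : mgraph) (iA : gV GA -> gV G) (iB : gV GB -> gV G)
    (jA : gE GA -> gE G) (jB : gE GB -> gE G) (dA : gE GA) (dB : gE GB) : Prop :=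
  CliqueSumMaps {
  cs_iA_inj : injective iA;
  cs_iB_inj : injective iB;
  cs_iAB1 : iA (gends dA).1 = iB (gends dB).1;
  cs_iAB2 : iA (gends dA).2 = iB (gends dB).2;
  cs_iAB_eq : forall x y, iA x = iB y ->
    (x = (gends dA).1 /\ y = (gends dB).1) \/ (x = (gends dA).2 /\ y = (gends dB).2);
  cs_iAB_cover : forall v, (exists x, iA x = v) \/ (exists y, iB y = v);
  cs_jA_inj : forall e e', e != dA -> e' != dA -> jA e = jA e' -> e = e';
  cs_jB_inj : forall e e', e != dB -> e' != dB -> jB e = jB e' -> e = e';
  cs_jAB_neq : forall e1 e2, e1 != dA -> e2 != dB -> jA e1 <> jB e2;
  cs_jAB_cover : forall e,
    (exists e1, e1 != dA /\ jA e1 = e) \/ (exists e2, e2 != dB /\ jB e2 = e);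
  cs_jA_joins : forall e, e != dA -> joins (jA e) (iA (gends e).1) (iA (gends e).2);
  cs_jB_joins : forall e, e != dB -> joins (jB e) (iB (gends e).1) (iB (gends e).2) }.

Lemma clique_sum_maps_sym G GA GB iA iB jA jB (dA : gE GA) (dB : gE GB) :
  @clique_sum_maps G GA GB iA iB jA jB dA dB -> clique_sum_maps iB iA jB jA dB dA.
Proof.
case=> ? ? ? ? iAB_eq iAB_cover ? ? jAB_neq jAB_cover ? ?; constructor => //.
- by move=> y x /esym /iAB_eq [[-> ->]|[-> ->]]; [left|right].
- by move=> v; case: (iAB_cover v); [right|left].
- by move=> e2 e1 n2 n1 /esym; apply: jAB_neq.
- by move=> e; case: (jAB_cover e); [right|left].
Qed.

Lemma clique_sum2_maps G G1 G2 (d1 : gE G1) (d2 : gE G2) :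
  clique_sum2 G G1 G2 d1 d2 ->
  exists i1 i2 j1 j2, @clique_sum_maps G G1 G2 i1 i2 j1 j2 d1 d2.
Proof.
move=> [i1 [i2 [j1 [j2 [[? ?] [? ?] [? ?] [? [? [? ?]]] [? ?]]]]]].
by exists i1, i2, j1, j2.
Qed.

Definition side_edges G GA (jA : gE GA -> gE G) (dA : gE GA) (S : {set gE G}) :
  {set gE GA} := [set e | (e != dA) && (jA e \in S)].

Definition side_links G GA (jA : gE GA -> gE G) (dA : gE GA) (S : {set gE G}) : bool :=
  connect (adj (side_edges jA dA S)) (gends dA).1 (gends dA).2.

(* The virtual edge dA stands for the connection of its ends through the B side. *)
Definition project G GA GB (jA : gE GA -> gE G) (jB : gE GB -> gE G) dA dB
    (S : {set gE G}) : {set gE GA} :=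
  side_edges jA dA S :|: (if side_links jB dB S then [set dA] else set0).

Definition glue G GA GB (jA : gE GA -> gE G) (jB : gE GB -> gE G) dA dB
    (S1 : {set gE GA}) (S2 : {set gE GB}) : {set gE G} :=
  jA @: (S1 :\ dA) :|: jB @: (S2 :\ dB).

Lemma side_connect G GA (iA : gV GA -> gV G) (jA : gE GA -> gE G) (dA : gE GA)
    (K : {set gE GA}) (F : {set gE G}) :
  (forall e, e != dA -> joins (jA e) (iA (gends e).1) (iA (gends e).2)) ->
  (forall e, e \in K -> e != dA -> jA e \in F) ->
  (dA \in K -> connect (adj F) (iA (gends dA).1) (iA (gends dA).2)) ->
  forall x y, connect (adj K) x y -> connect (adj F) (iA x) (iA y).
Proof.
move=> jA_joins KF dAF; apply: connect_homo => z w /existsP [e /andP [eK j]].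
have [edA|ne] := eqVneq e dA.
  subst e; case: (joinsP j) => -[-> ->]; last rewrite connect_adjC; exact: dAF.
apply: connect1; apply/existsP; exists (jA e); rewrite KF //=.
by case: (joinsP j) => -[-> ->]; [|rewrite joinsC]; apply: jA_joins.
Qed.

Section ProjectBasics.
Variables (G GA GB : mgraph) (jA : gE GA -> gE G) (jB : gE GB -> gE G).
Variables (dA : gE GA) (dB : gE GB).
Local Notation FA := (side_edges jA dA).
Local Notation linkB := (side_links jB dB).
Local Notation proj := (project jA jB dA dB).
Implicit Types (S : {set gE G}).

Lemma mem_project_virtual S : (dA \in proj S) = linkB S.
Proof. by rewrite !inE eqxx /=; case: (linkB S); rewrite !inE ?eqxx. Qed.

Lemma mem_project S e : e != dA -> (e \in proj S) = (e \in FA S).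
Proof.
by move=> ne; rewrite in_setU; case: (linkB S); rewrite !inE ?(negbTE ne) ?orbF.
Qed.

Lemma project_setD1 S : proj S :\ dA = FA S.
Proof.
apply/setP => e; rewrite in_setD1; have [->|ne] /= := eqVneq e dA.
  by rewrite inE eqxx.
by rewrite mem_project.
Qed.

End ProjectBasics.

Section Projection.
Variables (G GA GB : mgraph) (iA : gV GA -> gV G) (iB : gV GB -> gV G).
Variables (jA : gE GA -> gE G) (jB : gE GB -> gE G) (dA : gE GA) (dB : gE GB).
Hypothesis cs : clique_sum_maps iA iB jA jB dA dB.
Local Notation uA := (gends dA).1.
Local Notation vA := (gends dA).2.
Local Notation uB := (gends dB).1.
Local Notation vB := (gends dB).2.
Local Notation FA := (side_edges jA dA).
Local Notation FB := (side_edges jB dB).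
Local Notation linkB := (side_links jB dB).
Local Notation proj := (project jA jB dA dB).
Local Notation glu := (glue jA jB dA dB).
Implicit Types (S T : {set gE G}).

Lemma side_connectA (K : {set gE GA}) (F : {set gE G}) :
  (forall e, e \in K -> e != dA -> jA e \in F) ->
  (dA \in K -> connect (adj F) (iA uA) (iA vA)) ->
  forall x y, connect (adj K) x y -> connect (adj F) (iA x) (iA y).
Proof. exact: side_connect (cs_jA_joins cs). Qed.

Lemma side_connectB (K : {set gE GB}) (F : {set gE G}) :
  (forall e, e \in K -> e != dB -> jB e \in F) -> dB \notin K ->
  connect (adj K) uB vB -> connect (adj F) (iA uA) (iA vA).
Proof.
move=> KF dBK uvK; rewrite (cs_iAB1 cs) (cs_iAB2 cs).
by apply: (side_connect (cs_jB_joins cs) KF) uvK => dBK'; rewrite dBK' in dBK.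
Qed.

(* A retraction of G onto GA that maps every edge of S to an edge of [proj S]
   or to a single vertex. *)
Definition collapse S (w : gV G) : gV GA :=
  if [pick x | iA x == w] is Some x then x else
  if [pick y | iB y == w] is Some y then
    if connect (adj (FB S)) vB y then vA else uA
  else uA.

Lemma collapse_iA S x : collapse S (iA x) = x.
Proof.
by rewrite /collapse; case: pickP => [x' /eqP /(cs_iA_inj cs) //|/(_ x)]; rewrite eqxx.
Qed.

Lemma collapse_iB S y :
  collapse S (iB y) =
    if y == uB then uA else if connect (adj (FB S)) vB y then vA else uA.
Proof.
rewrite /collapse; case: pickP => [x /eqP /(cs_iAB_eq cs) [[-> ->]|[-> ->]]|noA].
- by rewrite eqxx.
- by rewrite eq_sym (negbTE (gnoloop dB)) connect0.
case: pickP => [y' /eqP /(cs_iB_inj cs) ->|/(_ y)]; last by rewrite eqxx.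
by case: eqVneq => // yu; move: (noA uA); rewrite (cs_iAB1 cs) yu eqxx.
Qed.

Lemma collapse_adjB S a b : adj (FB S) a b ->
  connect (adj (proj S)) (collapse S (iB a)) (collapse S (iB b)).
Proof.
move=> ab; have ba : connect (adj (FB S)) b a by rewrite connect_adjC connect1.
have sameB : connect (adj (FB S)) vB a = connect (adj (FB S)) vB b.
  by apply/idP/idP => /connect_trans; apply; rewrite // connect1.
have virtual : linkB S -> connect (adj (proj S)) uA vA.
  by move=> linkS; apply/connect1/adj_ends; rewrite mem_project_virtual.
rewrite !collapse_iB; case: eqVneq => [au|_]; case: eqVneq => [bu|_] //.
- case: ifP => // vBb; apply: virtual.
  by rewrite /side_links connect_adjC -au (connect_trans vBb ba).
- case: ifP => // vBa; rewrite connect_adjC; apply: virtual.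
  by rewrite /side_links connect_adjC -bu (connect_trans vBa (connect1 ab)).
- by rewrite sameB.
Qed.

Lemma project_connect S x y :
  connect (adj S) (iA x) (iA y) -> connect (adj (proj S)) x y.
Proof.
suff collapse_homo w w' : connect (adj S) w w' ->
    connect (adj (proj S)) (collapse S w) (collapse S w').
  by move/collapse_homo; rewrite !collapse_iA.
move: w w'; apply: connect_homo => z w /existsP [f /andP [fS j]].
case: (cs_jAB_cover cs f) => -[e [ne <-{f}]] in fS j *.
  have eS : e \in proj S by rewrite mem_project // inE ne fS.
  case: (joins_same (cs_jA_joins cs ne) j) => -[-> ->]; rewrite !collapse_iA.
    exact/connect1/adj_ends.
  by rewrite connect_adjC; apply/connect1/adj_ends.
have eS : e \in FB S by rewrite inE ne fS.
case: (joins_same (cs_jB_joins cs ne) j) => -[-> ->]; apply: collapse_adjB.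
  exact: adj_ends.
by rewrite adj_sym adj_ends.
Qed.

Lemma project_setD1_side S e : e != dA -> proj (S :\ jA e) = proj S :\ e.
Proof.
move=> ne; have sameB : FB (S :\ jA e) = FB S.
  apply/setP => f; rewrite !inE; have [//|nf] /= := eqVneq f dB.
  by case: eqVneq => //= /esym; move/(cs_jAB_neq cs ne nf).
apply/setP => f; rewrite in_setD1.
have [->|nf] := eqVneq f dA.
  by rewrite !mem_project_virtual /side_links sameB (eq_sym dA e) (negbTE ne).
rewrite !mem_project // !inE nf /=; have [->|nfe] := eqVneq f e.
  by rewrite eqxx.
suff -> : jA f != jA e by [].
by apply: contra nfe => /eqP /(cs_jA_inj cs nf ne) ->.
Qed.

Lemma connect_project S x y :
  connect (adj (proj S)) x y = connect (adj S) (iA x) (iA y).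
Proof.
apply/idP/idP => [|]; last exact: project_connect.
apply: side_connectA => [e|]; first by move=> + ne; rewrite mem_project // inE ne.
rewrite mem_project_virtual; apply: side_connectB; last by rewrite inE eqxx.
by move=> e; rewrite inE => /andP [].
Qed.

Lemma iA_ends_neq : iA uA != iA vA.
Proof. by rewrite (inj_eq (cs_iA_inj cs)) gnoloop. Qed.

Lemma side_links_not_both S : acyclic S -> ~~ (side_links jA dA S && linkB S).
Proof.
move=> acS; apply/andP => -[linkA linkB'].
apply: (forest_disjoint_paths (A := jA @: FA S) (B := jB @: FB S) acS _ _ _ iA_ends_neq).
- by apply/subsetP => f /imsetP [e]; rewrite inE => /andP [_ ?] ->.
- by apply/subsetP => f /imsetP [e]; rewrite inE => /andP [_ ?] ->.
- apply: disjointP => f /imsetP [e]; rewrite inE => /andP [ne _] ->.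
  by case/imsetP => e'; rewrite inE => /andP [ne' _]; apply: (cs_jAB_neq cs).
- apply: side_connectA linkA => [e eS _|]; first exact: imset_f.
  by rewrite inE eqxx.
- apply: side_connectB linkB' => [e eS _|]; first exact: imset_f.
  by rewrite inE eqxx.
Qed.

Lemma project_spanning_tree S : spanning_tree S -> spanning_tree (proj S).
Proof.
move=> tS; case/and3P: (tS) => _ _ acS; apply/and3P; split.
- exact: subsetT.
- apply/forallP => x; apply/implyP => _; apply/forallP => y; apply/implyP => _.
  exact/project_connect/spanning_tree_connect.
apply/forallP => e; apply/implyP => eS; apply/negP.
have [edA|ne] := eqVneq e dA.
  subst e; rewrite project_setD1 => linkA; rewrite mem_project_virtual in eS.
  by move: (side_links_not_both acS); rewrite eS andbT /side_links linkA.
have jeS : jA e \in S by move: eS; rewrite mem_project // inE ne.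
rewrite -project_setD1_side // connect_project => cycle; apply: (acyclicP acS jeS).
by case: (joinsP (cs_jA_joins cs ne)) => -[<- <-]; rewrite // connect_adjC.
Qed.

Lemma project_disjoint S T : [disjoint S & T] -> ~~ (linkB S && linkB T) ->
  [disjoint proj S & proj T].
Proof.
move=> dST links; apply: disjointP => e.
have [->|ne] := eqVneq e dA.
  by rewrite !mem_project_virtual => Sl Tl; rewrite Sl Tl in links.
rewrite !mem_project // !inE ne /= => jeS jeT.
by move: (disjointFl dST jeT); rewrite jeS.
Qed.

Lemma project_cover S T : S :|: T = setT -> linkB S || linkB T ->
  proj S :|: proj T = setT.
Proof.
move=> uST links; apply/setP => e; rewrite in_setT in_setU.
have [->|ne] := eqVneq e dA; first by rewrite !mem_project_virtual.
have : jA e \in S :|: T by rewrite uST inE.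
by rewrite !mem_project // !inE ne.
Qed.

Lemma side_links_either S T : bispanning GA ->
  spanning_tree S -> spanning_tree T -> [disjoint S & T] -> S :|: T = setT ->
  linkB S || linkB T.
Proof.
move=> bA tS tT dST uST; apply/negPn/negP; rewrite negb_or => /andP [nS nT].
have dP : [disjoint proj S & proj T] by rewrite project_disjoint ?(negbTE nS).
move/negP: (bispanning_no_pair_setD1 uA dA bA (project_spanning_tree tS)
  (project_spanning_tree tT) dP); apply.
apply/eqP/setP => e; rewrite in_setU in_setD1 in_setT andbT.
have [->|ne] := eqVneq e dA.
  by rewrite !mem_project_virtual (negbTE nS) (negbTE nT).
have : jA e \in S :|: T by rewrite uST inE.
by rewrite !mem_project // !inE ne.
Qed.

Lemma side_edges_glueA (S1 : {set gE GA}) (S2 : {set gE GB}) :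
  FA (glu S1 S2) = S1 :\ dA.
Proof.
apply/setP => e; rewrite inE in_setD1; have [//|ne] /= := eqVneq e dA.
apply/idP/idP => [|eS]; last by rewrite in_setU imset_f // in_setD1 ne.
case/setUP => /imsetP [e'] /setD1P [ne' e'S].
  by move/(cs_jA_inj cs ne ne') ->.
by move/(cs_jAB_neq cs ne ne').
Qed.

Lemma side_edges_glueB (S1 : {set gE GA}) (S2 : {set gE GB}) :
  FB (glu S1 S2) = S2 :\ dB.
Proof.
apply/setP => e; rewrite inE in_setD1; have [//|ne] /= := eqVneq e dB.
apply/idP/idP => [|eS]; last by rewrite in_setU imset_f ?orbT // in_setD1 ne.
case/setUP => /imsetP [e'] /setD1P [ne' e'S].
  by move/esym/(cs_jAB_neq cs ne').
by move/(cs_jB_inj cs ne ne') ->.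
Qed.

Lemma mem_glueA (S1 : {set gE GA}) (S2 : {set gE GB}) e :
  e != dA -> (jA e \in glu S1 S2) = (e \in S1).
Proof. by move=> ne; move/setP/(_ e): (side_edges_glueA S1 S2); rewrite !inE ne. Qed.

Lemma mem_glueB (S1 : {set gE GA}) (S2 : {set gE GB}) e :
  e != dB -> (jB e \in glu S1 S2) = (e \in S2).
Proof. by move=> ne; move/setP/(_ e): (side_edges_glueB S1 S2); rewrite !inE ne. Qed.

Lemma side_links_glue (S1 : {set gE GA}) (S2 : {set gE GB}) :
  spanning_tree S2 -> linkB (glu S1 S2) = (dB \notin S2).
Proof.
move=> tS2; rewrite /side_links side_edges_glueB; case: (boolP (dB \in S2)) => dBS2.
  by apply/negP; apply: acyclicP dBS2; case/and3P: tS2.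
have -> : S2 :\ dB = S2 by apply/setDidPl; rewrite disjoint_sym disjoints1.
exact: spanning_tree_connect.
Qed.

Lemma project_glue (S1 : {set gE GA}) (S2 : {set gE GB}) :
  spanning_tree S2 -> (dA \in S1) = (dB \notin S2) -> proj (glu S1 S2) = S1.
Proof.
move=> tS2 dAB; rewrite /project side_links_glue // side_edges_glueA -dAB.
case: ifP => dAS1; first by rewrite setUC setD1K.
by rewrite setU0; apply/setDidPl; rewrite disjoint_sym disjoints1 dAS1.
Qed.

Section Glue.
Variables (S1 : {set gE GA}) (S2 : {set gE GB}).
Hypotheses (tS1 : spanning_tree S1) (tS2 : spanning_tree S2).
Hypothesis dAB : (dA \in S1) = (dB \notin S2).

Lemma glue_connectA x y : connect (adj (glu S1 S2)) (iA x) (iA y).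
Proof. by rewrite -connect_project project_glue // spanning_tree_connect. Qed.

Lemma glue_acyclicA e : e \in S1 -> e != dA ->
  ~ connect (adj (glu S1 S2 :\ jA e)) (iA (gends e).1) (iA (gends e).2).
Proof.
move=> eS ne; rewrite -connect_project project_setD1_side // project_glue //.
by apply: acyclicP eS; case/and3P: tS1.
Qed.

End Glue.

Lemma glue_project S : glu (proj S) (project jB jA dB dA S) = S.
Proof.
apply/setP => f; case: (cs_jAB_cover cs f) => -[e [ne <-]].
  by rewrite mem_glueA // mem_project // inE ne.
by rewrite mem_glueB // mem_project // inE ne.
Qed.

Lemma glue_disjoint (S1 T1 : {set gE GA}) (S2 T2 : {set gE GB}) :
  [disjoint S1 & T1] -> [disjoint S2 & T2] -> [disjoint glu S1 S2 & glu T1 T2].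
Proof.
move=> d1 d2; apply: disjointP => f; case: (cs_jAB_cover cs f) => -[e [ne <-]].
  by rewrite !mem_glueA // => /(disjointFr d1) ->.
by rewrite !mem_glueB // => /(disjointFr d2) ->.
Qed.

Lemma glue_cover (S1 T1 : {set gE GA}) (S2 T2 : {set gE GB}) :
  S1 :|: T1 = setT -> S2 :|: T2 = setT -> glu S1 S2 :|: glu T1 T2 = setT.
Proof.
move=> u1 u2; apply/setP => f; rewrite in_setT in_setU.
case: (cs_jAB_cover cs f) => -[e [ne <-]].
  by rewrite !mem_glueA // -in_setU u1 inE.
by rewrite !mem_glueB // -in_setU u2 inE.
Qed.

End Projection.

Lemma glueC G GA GB (jA : gE GA -> gE G) (jB : gE GB -> gE G) dA dB S1 S2 :
  glue jB jA dB dA S2 S1 = glue jA jB dA dB S1 S2.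
Proof. by rewrite /glue setUC. Qed.

Lemma glue_spanning_tree G GA GB iA iB jA jB (dA : gE GA) (dB : gE GB)
    (S1 : {set gE GA}) (S2 : {set gE GB}) :
  @clique_sum_maps G GA GB iA iB jA jB dA dB ->
  spanning_tree S1 -> spanning_tree S2 -> (dA \in S1) = (dB \notin S2) ->
  spanning_tree (glue jA jB dA dB S1 S2).
Proof.
move=> cs tS1 tS2 dAB; have csB := clique_sum_maps_sym cs.
have dBA : (dB \in S2) = (dA \notin S1) by rewrite dAB negbK.
have connectA := glue_connectA cs tS1 tS2 dAB.
have connectB := glue_connectA csB tS2 tS1 dBA; rewrite glueC in connectB.
have to_uA w : connect (adj (glue jA jB dA dB S1 S2)) w (iA (gends dA).1).
  case: (cs_iAB_cover cs w) => -[x <-]; first exact: connectA.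
  by rewrite (cs_iAB1 cs); apply: connectB.
apply/and3P; split; first exact: subsetT.
  apply/forallP => w; apply/implyP => _; apply/forallP => w'; apply/implyP => _.
  by apply: connect_trans (to_uA w) _; rewrite connect_adjC.
apply/forallP => f; apply/implyP; case/setUP => /imsetP [e /setD1P [ne eS] ->];
  apply/negP.
  case: (joinsP (cs_jA_joins cs ne)) => -[<- <-]; last rewrite connect_adjC;
  exact: (glue_acyclicA cs tS1 tS2 dAB eS ne).
have := glue_acyclicA csB tS2 tS1 dBA eS ne; rewrite glueC.
by case: (joinsP (cs_jB_joins cs ne)) => -[<- <-]; last rewrite connect_adjC.
Qed.

Lemma Vtau_memC (H : mgraph) (p : {set gE H} * {set gE H}) e :
  p \in Vtau H -> (e \in p.2) = (e \notin p.1).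
Proof.
rewrite inE => /and4P [_ _ dp /eqP up]; case eA: (e \in p.1) => /=.
  exact: disjointFr dp eA.
have : e \in p.1 :|: p.2 by rewrite up inE.
by rewrite in_setU eA.
Qed.

Lemma Veta_exclusive G1 G2 (d1 : gE G1) (d2 : gE G2) q : q \in Veta d1 d2 ->
  (d1 \in q.1.1) = (d2 \notin q.2.1) /\ (d1 \in q.1.2) = (d2 \notin q.2.2).
Proof.
rewrite inE => /and3P [V1 V2]; rewrite !(Vtau_memC _ V1) !(Vtau_memC _ V2).
by case: (d1 \in q.1.1); case: (d2 \in q.2.1).
Qed.

Section Pairs.
Variables (G GA GB : mgraph) (iA : gV GA -> gV G) (iB : gV GB -> gV G).
Variables (jA : gE GA -> gE G) (jB : gE GB -> gE G) (dA : gE GA) (dB : gE GB).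

Hypothesis cs : clique_sum_maps iA iB jA jB dA dB.

Definition project_pair (p : {set gE G} * {set gE G}) : {set gE GA} * {set gE GA} :=
  (project jA jB dA dB p.1, project jA jB dA dB p.2).

Lemma side_links_exclusive p : bispanning GA -> bispanning GB -> p \in Vtau G ->
  side_links jB dB p.1 = ~~ side_links jB dB p.2.
Proof.
move=> bA bB; rewrite inE => /and4P [tS tT dST /eqP uST].
have csB := clique_sum_maps_sym cs.
have [acS acT] : acyclic p.1 /\ acyclic p.2 by case/and3P: tS; case/and3P: tT.
move: (side_links_either cs bA tS tT dST uST) (side_links_either csB bB tS tT dST uST).
move: (side_links_not_both cs acS) (side_links_not_both cs acT).
by case: (side_links jB dB p.1); case: (side_links jB dB p.2);
  case: (side_links jA dA p.1); case: (side_links jA dA p.2).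
Qed.

Lemma project_pair_Vtau p : bispanning GA -> bispanning GB -> p \in Vtau G ->
  project_pair p \in Vtau GA.
Proof.
move=> bA bB Vp; have links := side_links_exclusive bA bB Vp.
move: Vp; rewrite !inE => /and4P [tS tT dST /eqP uST].
rewrite !(project_spanning_tree cs) // project_disjoint ?project_cover ?eqxx //.
- by rewrite links orNb.
- by rewrite links andNb.
Qed.

End Pairs.

Definition split_pair G GA GB (jA : gE GA -> gE G) (jB : gE GB -> gE G) dA dB
    (p : {set gE G} * {set gE G}) :=
  (project_pair jA jB dA dB p, project_pair jB jA dB dA p).

Definition glue_pair G GA GB (jA : gE GA -> gE G) (jB : gE GB -> gE G) dA dB
    (q : ({set gE GA} * {set gE GA}) * ({set gE GB} * {set gE GB})) :
    {set gE G} * {set gE G} :=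
  (glue jA jB dA dB q.1.1 q.2.1, glue jA jB dA dB q.1.2 q.2.2).

Section Bijection.
Variables (G GA GB : mgraph) (iA : gV GA -> gV G) (iB : gV GB -> gV G).
Variables (jA : gE GA -> gE G) (jB : gE GB -> gE G) (dA : gE GA) (dB : gE GB).
Hypothesis cs : clique_sum_maps iA iB jA jB dA dB.
Let csB := clique_sum_maps_sym cs.
Local Notation split := (split_pair jA jB dA dB).
Local Notation glu := (glue_pair jA jB dA dB).

Lemma split_pair_Veta p : bispanning GA -> bispanning GB -> p \in Vtau G ->
  split p \in Veta dA dB.
Proof.
move=> bA bB Vp; rewrite inE /= (project_pair_Vtau cs) ?(project_pair_Vtau csB) //=.
rewrite !mem_project_virtual.
move: Vp; rewrite inE => /and4P [/and3P [_ _ acS] /and3P [_ _ acT] _ _].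
rewrite negb_or !(andbC (side_links jB dB _)).
by rewrite (side_links_not_both cs acS) (side_links_not_both cs acT).
Qed.

Lemma glue_pair_Vtau q : q \in Veta dA dB -> glu q \in Vtau G.
Proof.
move=> Vq; have [dAB1 dAB2] := Veta_exclusive Vq.
move: Vq; rewrite !inE => /and3P [/and4P [tS1 tT1 d1 /eqP u1]].
case/and4P=> tS2 tT2 d2 /eqP u2 _.
by rewrite /= !(glue_spanning_tree cs) // (glue_disjoint cs) // (glue_cover cs) ?eqxx.
Qed.

Lemma split_pairK p : glu (split p) = p.
Proof. by case: p => S T; rewrite /glue_pair /= !(glue_project cs). Qed.

Lemma glue_pairK q : q \in Veta dA dB -> split (glu q) = q.
Proof.
move=> Vq; have [dAB1 dAB2] := Veta_exclusive Vq.
have dBA1 : (dB \in q.2.1) = (dA \notin q.1.1) by rewrite dAB1 negbK.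
have dBA2 : (dB \in q.2.2) = (dA \notin q.1.2) by rewrite dAB2 negbK.
move: Vq; rewrite !inE => /and3P [/and4P [tS1 tT1 _ _] /and4P [tS2 tT2 _ _] _].
rewrite /split_pair /project_pair /glue_pair /= !(project_glue cs) //.
by rewrite -!(glueC jA) !(project_glue csB) // -!surjective_pairing.
Qed.

End Bijection.

Theorem mainTheorem19 (G G1 G2 : mgraph) (d1 : gE G1) (d2 : gE G2) :
  atomic G -> vertex_connectivity_two G ->
  simple_graph G1 -> simple_graph G2 -> bispanning G1 -> bispanning G2 ->
  clique_sum2 G G1 G2 d1 d2 ->
  exists f : {x | x \in Vtau G} -> {y | y \in Veta d1 d2}, bijective f.
Proof.
move=> _ _ _ _ b1 b2 /clique_sum2_maps [i1 [i2 [j1 [j2 cs]]]].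
exists (fun p => exist _ (split_pair j1 j2 d1 d2 (sval p))
                       (split_pair_Veta cs b1 b2 (svalP p))).
exists (fun q => exist _ (glue_pair j1 j2 d1 d2 (sval q)) (glue_pair_Vtau cs (svalP q))).
  by move=> p; apply: val_inj; rewrite /= (split_pairK cs).
by move=> q; apply: val_inj; rewrite /= (glue_pairK cs) ?(svalP q).
Qed.
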